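(* Let $G=(V,E)$ be a connected graph with positive edge costs $c:E\to\mathbb{R}_+$, let $\alpha\ge1$, and let $(U,\complement{U})$ be an $\alpha$-approximate minimum cut of $G$. Let $\mathcal{C}=\{Q\subsetneq V:\complement{U}\subsetneq Q,\ d(Q)\le d(U)\}$ and suppose $\mathcal{C}\ne\emptyset$. Let $S\subseteq U$ be a minimal (with respect to inclusion) set such that $S\cap Q\ne\emptyset$ for all $Q\in\mathcal{C}$. Then $|S|\le\lfloor 2\alpha\rfloor+1$.
   Context: A cut is a partition of $V$ into two non-empty parts; for $\emptyset\ne U\subsetneq V$ write $\complement{U}=V\setminus U$ and $d(U)$ for the total cost of edges with exactly one endpoint in $U$. Let $\lambda=\min\{d(U):\emptyset\ne U\subsetneq V\}$; $(U,\complement{U})$ is an $\alpha$-approximate minimum cut if $d(U)\le\alpha\lambda$. *)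

From HB Require Import structures.
From mathcomp Require Import all_boot all_order all_algebra.
Set Implicit Arguments. Unset Strict Implicit. Unset Printing Implicit Defensive.
Import Order.TTheory GRing.Theory Num.Theory.
Local Open Scope ring_scope.

Definition weighted_graph (R : realFieldType) (V : finType) (e : rel V)
    (c : V -> V -> R) : Prop :=
  [/\ symmetric e, irreflexive e,
      (forall x y, c x y = c y x) & (forall x y, e x y -> 0 < c x y)].

Definition connected_graph (V : finType) (e : rel V) : Prop :=
  forall x y : V, connect e x y.

(* d(U): total cost of edges with exactly one endpoint in U
   (each such edge {x,y} is counted once, via its endpoint x in U). *)
Definition dcut (R : realFieldType) (V : finType) (e : rel V)
    (c : V -> V -> R) (U : {set V}) : R :=
  \sum_(x in U) \sum_(y in ~: U | e x y) c x y.

Definition is_cut (V : finType) (U : {set V}) : bool :=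
  (U != set0) && (U != setT).

(* (U, ~U) is an alpha-approximate minimum cut: d(U) <= alpha * lambda,
   where lambda is the minimum of d over cuts (unfolded: d(U) <= alpha d(W)
   for every cut W). *)
Definition approx_min_cut (R : realFieldType) (V : finType) (e : rel V)
    (c : V -> V -> R) (alpha : R) (U : {set V}) : Prop :=
  is_cut U /\ forall W : {set V}, is_cut W -> dcut e c U <= alpha * dcut e c W.

Definition inC (R : realFieldType) (V : finType) (e : rel V)
    (c : V -> V -> R) (U Q : {set V}) : bool :=
  [&& Q \proper setT, (~: U) \proper Q & dcut e c Q <= dcut e c U].

Definition hitsC (R : realFieldType) (V : finType) (e : rel V)
    (c : V -> V -> R) (U S : {set V}) : bool :=
  [forall Q : {set V}, inC e c U Q ==> (S :&: Q != set0)].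

(* Minimality of S gives, for each s in S, a cut Q_s in C with Q_s :&: S = {s}.
   Label each vertex u by missed(u) = {s in S | u \notin Q_s}: the label is empty
   outside U and is S :\ s at s in S.  The sets X_i = {u : |missed(u)| <= i},
   i < |S| - 2, contain ~U and avoid S, so as S hits C, d(X_i) >= d(U); the sets
   Y_s = {u : missed(u) = S :\ s} are cuts, so d(U) <= alpha d(Y_s).  Edge by
   edge, the X_i and Y_s separate the endpoints no more often than the Q_s do, so
     sum_s d(Y_s) + sum_i d(X_i) <= sum_s d(Q_s) <= |S| d(U).
   Hence sum_s d(Y_s) <= 2 d(U) and |S| d(U) <= 2 alpha d(U). *)

From HB Require Import structures.
From mathcomp Require Import all_boot all_order all_algebra.
From mathcomp Require Import zify lra.
Import Order.TTheory GRing.Theory Num.Theory.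
Set Implicit Arguments. Unset Strict Implicit.

Lemma sum_ord_leq_neq (n a b : nat) :
  \sum_(i < n) ((a <= i) != (b <= i) : nat)
  = maxn (minn a n) (minn b n) - minn (minn a n) (minn b n).
Proof.
elim: n => [|n IH]; first by rewrite big_ord0; lia.
by rewrite big_ord_recr /= IH; case: (leqP a n); case: (leqP b n) => /=; lia.
Qed.

Section SetCounting.
Variable V : finType.
Implicit Types S A B : {set V}.

Lemma sum_mem_card S A : A \subset S -> \sum_(s in S) (s \in A : nat) = #|A|.
Proof.
move=> sAS; rewrite -{2}(setIidPr sAS) -sum1_card big_mkcond [RHS]big_mkcond /=.
by apply: eq_bigr => s _; rewrite inE; case: (s \in S); case: (s \in A).
Qed.

Lemma sum_mem_neq S A B : A \subset S -> B \subset S ->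
  \sum_(s in S) ((s \in A) != (s \in B) : nat) = #|A :\: B| + #|B :\: A|.
Proof.
move=> sAS sBS; rewrite -!(@sum_mem_card S) ?(subset_trans (subsetDl _ _)) //.
rewrite -big_split /=; apply: eq_bigr => s _.
by rewrite !inE; case: (s \in A); case: (s \in B).
Qed.

Lemma sum_eq_setD1_le S A :
  \sum_(s in S) (A == S :\ s : nat) <= (#|A|.+1 == #|S|).
Proof.
case: (boolP [exists s in S, A == S :\ s]) => [|/exists_inPn noD1].
  case/exists_inP=> s0 s0S /eqP ->; rewrite (bigD1 s0) //= eqxx big1 => [|t /andP [tS ts0]].
    by rewrite [#|S|](cardsD1 s0) s0S add1n eqxx.
  case: eqP => // /setP/(_ t).
  by rewrite !inE eqxx tS ts0.
by rewrite big1 // => s sS; rewrite (negbTE (noD1 s sS)).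
Qed.

Lemma sum_level_sep_le S A B : A \subset S -> B \subset S ->
  \sum_(s in S) ((A == S :\ s) != (B == S :\ s) : nat)
  + \sum_(i < #|S| - 2) ((#|A| <= i) != (#|B| <= i) : nat)
  <= \sum_(s in S) ((s \in A) != (s \in B) : nat).
Proof.
move=> sAS sBS; have [-> | neqAB] := eqVneq A B.
  by rewrite !big1 // => *; rewrite eqxx.
have sep_gt0 : 0 < #|A :\: B| + #|B :\: A|.
  rewrite addn_gt0 !card_gt0 !setD_eq0 -negb_and -eqEsubset; exact: neqAB.
have top_le : \sum_(s in S) ((A == S :\ s) != (B == S :\ s) : nat)
              <= (#|A|.+1 == #|S|) + (#|B|.+1 == #|S|).
  apply: leq_trans (leq_add (sum_eq_setD1_le S A) (sum_eq_setD1_le S B)).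
  by rewrite -big_split; apply: leq_sum => s _; case: (A == _); case: (B == _).
rewrite sum_ord_leq_neq sum_mem_neq //.
have := cardsID B A; have := cardsID A B; rewrite setIC.
have := subset_leq_card sAS; have := subset_leq_card sBS.
lia.
Qed.

Lemma minset_setD1 (P : pred {set V}) A x : minset P A -> x \in A -> ~~ P (A :\ x).
Proof.
move=> /minsetP [_ A_min] xA; apply/negP => /A_min/(_ (subsetDl _ _))/setP/(_ x).
by rewrite !inE eqxx xA.
Qed.
End SetCounting.

Local Open Scope ring_scope.

Section Cuts.
Variables (R : realFieldType) (V : finType) (e : rel V) (c : V -> V -> R).
Hypotheses (e_sym : symmetric e) (c_sym : forall x y, c x y = c y x).
Hypothesis c_gt0 : forall x y, e x y -> 0 < c x y.

Definition edge_cost x y : R := if e x y then c x y else 0.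

Lemma edge_cost_ge0 x y : 0 <= edge_cost x y.
Proof. by rewrite /edge_cost; case: ifP => // /c_gt0/ltW. Qed.

Lemma dcut_edge_cost X :
  dcut e c X = \sum_x \sum_y edge_cost x y *+ ((x \in X) && (y \notin X)).
Proof.
rewrite /dcut big_mkcond; apply: eq_bigr => x _; case: (x \in X); last by rewrite big1.
by rewrite big_mkcond; apply: eq_bigr => y _; rewrite inE /edge_cost; case: (e x y); case: (y \in X).
Qed.

Lemma dcut_sep X :
  dcut e c X *+ 2 = \sum_x \sum_y edge_cost x y *+ ((x \in X) != (y \in X)).
Proof.
rewrite mulr2n {1}dcut_edge_cost dcut_edge_cost [in RHS in _ + RHS]exchange_big -big_split.
apply: eq_bigr => x _; rewrite -big_split /=; apply: eq_bigr => y _.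
rewrite /edge_cost e_sym c_sym -mulrnDr.
by case: (x \in X); case: (y \in X).
Qed.

Lemma dcutC X : dcut e c (~: X) = dcut e c X.
Proof.
apply/eqP; rewrite -[_ == _](eqrMn2r 2) !dcut_sep; apply/eqP; apply: eq_bigr => x _; apply: eq_bigr => y _.
by rewrite !inE; case: (x \in X); case: (y \in X).
Qed.

Definition nsep (I : finType) (P : pred I) (F : I -> {set V}) x y : nat :=
  \sum_(i | P i) ((x \in F i) != (y \in F i)).

Lemma sum_dcut_nsep (I : finType) (P : pred I) (F : I -> {set V}) :
  (\sum_(i | P i) dcut e c (F i)) *+ 2 = \sum_x \sum_y edge_cost x y *+ nsep P F x y.
Proof.
rewrite -sumrMnl (eq_bigr _ (fun i _ => dcut_sep (F i))) exchange_big; apply: eq_bigr => x _.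
by rewrite exchange_big; apply: eq_bigr => y _; rewrite sumrMnr.
Qed.

Lemma dcut_gt0 X : connected_graph e -> is_cut X -> 0 < dcut e c X.
Proof.
move=> conn /andP [/set0Pn [x xX] ntX].
have /subsetPn [y _ yX] : ~~ (setT \subset X) by rewrite subTset.
have [[x' y'] /= /and3P [x'X y'X ex'y'] | no_cross] :=
  pickP [pred p : V * V | [&& p.1 \in X, p.2 \notin X & e p.1 p.2]]; last first.
  have closedX : closed e X.
    move=> u v euv; have := no_cross (u, v); have := no_cross (v, u); rewrite /= e_sym euv.
    by case: (u \in X); case: (v \in X).
  by move: yX; rewrite -(closed_connect closedX (conn x y)) xX.
rewrite /dcut (bigD1 x') //= (bigD1 y') /=; last by rewrite inE y'X ex'y'.
apply: lt_le_trans (c_gt0 ex'y') _; rewrite -addrA lerDl addr_ge0 //.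
  by apply: sumr_ge0 => v /andP [/andP [_ /c_gt0/ltW]].
by apply: sumr_ge0 => u _; apply: sumr_ge0 => v /andP [_ /c_gt0/ltW].
Qed.
End Cuts.

Section MinimalHittingSet.
Variables (R : realFieldType) (V : finType) (e : rel V) (c : V -> V -> R).
Variables (alpha : R) (U S : {set V}).
Hypotheses (e_sym : symmetric e) (c_sym : forall x y, c x y = c y x).
Hypothesis c_gt0 : forall x y, e x y -> 0 < c x y.
Hypothesis e_connected : connected_graph e.
Hypothesis U_approx : approx_min_cut e c alpha U.
Hypotheses (S_sub_U : S \subset U) (S_hits : hitsC e c U S).
Hypothesis S_minimal : forall s, s \in S -> ~~ hitsC e c U (S :\ s).

Definition private_cut s : {set V} :=
  odflt set0 [pick Q | inC e c U Q && ((S :\ s) :&: Q == set0)].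

Lemma private_cutP s : s \in S ->
  inC e c U (private_cut s) /\ (S :\ s) :&: private_cut s = set0.
Proof.
move=> sS; rewrite /private_cut; case: pickP => [Q /andP [QC /eqP //] | noQ].
have /forallPn [Q] := S_minimal sS; rewrite negb_imply negbK => /andP [QC QsS].
by have := noQ Q; rewrite QC QsS.
Qed.

Lemma mem_private_cut s t : s \in S -> t \in S -> (t \in private_cut s) = (t == s).
Proof.
move=> sS tS; have [QC /setP disj] := private_cutP sS.
have [-> | ts] := eqVneq t s; last by have := disj t; rewrite !inE ts tS /=.
have /forallP/(_ (private_cut s)) := S_hits; rewrite QC => /set0Pn [u].
rewrite inE => /andP [uS uQ]; have := disj u; rewrite !inE uS uQ !andbT.
by move: uQ; case: eqP => [-> |].
Qed.

Lemma compl_sub_private_cut s : s \in S -> ~: U \subset private_cut s.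
Proof. by case/private_cutP => /and3P [_ /properP [] //]. Qed.

Definition missed u := [set t in S | u \notin private_cut t].

Lemma missed_sub u : missed u \subset S.
Proof. by apply/subsetP => t; rewrite inE => /andP []. Qed.

Lemma missed_S s : s \in S -> missed s = S :\ s.
Proof.
move=> sS; apply/setP => t; rewrite !inE.
by case tS: (t \in S); rewrite ?andbF // mem_private_cut // eq_sym andbT.
Qed.

Lemma missed_out v : v \notin U -> missed v = set0.
Proof.
move=> vU; apply/setP => t; rewrite !inE; case tS: (t \in S) => //=.
by rewrite (subsetP (compl_sub_private_cut tS)) // inE.
Qed.

Definition missed_eq s := [set u | missed u == S :\ s].

Definition missed_le (i : nat) := [set u | #|missed u| <= i]%N.

Lemma nsep_missed_le x y :
  (nsep (fun s => s \in S) missed_eq x y + nsep xpredT (fun i : 'I_(#|S| - 2) => missed_le i) x y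
  <= nsep (fun s => s \in S) private_cut x y)%N.
Proof.
have -> : nsep (fun s => s \in S) private_cut x y
          = (\sum_(s in S) ((s \in missed x) != (s \in missed y)))%N.
  by apply: eq_bigr => s sS; rewrite !inE sS; case: (x \in _); case: (y \in _).
rewrite /nsep; under eq_bigr do rewrite !inE; under [X in (_ + X)%N]eq_bigr do rewrite !inE.
exact: sum_level_sep_le (missed_sub x) (missed_sub y).
Qed.

Lemma sum_dcut_missed_le :
  \sum_(s in S) dcut e c (missed_eq s) + \sum_(i < #|S| - 2) dcut e c (missed_le i)
  <= \sum_(s in S) dcut e c (private_cut s).
Proof.
rewrite -(ler_pMn2r (isT : 0 < 2)%N) mulrnDl !sum_dcut_nsep // -big_split /=.
apply: ler_sum => x _; rewrite -big_split /=; apply: ler_sum => y _.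
by rewrite -mulrnDr ler_wpMn2l ?edge_cost_ge0 ?nsep_missed_le.
Qed.

Lemma dcut_private_cut_le s : s \in S -> dcut e c (private_cut s) <= dcut e c U.
Proof. by case/private_cutP => /and3P []. Qed.

Lemma dcut_missed_le_ge i : (i < #|S| - 2)%N -> dcut e c U <= dcut e c (missed_le i).
Proof.
move=> ilt; have S_out s : s \in S -> s \notin missed_le i.
  by move=> sS; rewrite inE missed_S // -ltnNge; have := cardsD1 s S; rewrite sS; lia.
have complU_sub : ~: U \subset missed_le i.
  by apply/subsetP => v; rewrite !inE => /missed_out ->; rewrite cards0.
have [<- | complU_neq] := eqVneq (~: U) (missed_le i); first by rewrite dcutC.
rewrite leNgt; apply/negP => lt_dU.
have [s sS] : exists s, s \in S by apply/set0Pn; rewrite -card_gt0; lia.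
have : inC e c U (missed_le i).
  rewrite /inC properT properEneq complU_neq complU_sub (ltW lt_dU) !andbT.
  by apply: contraNneq (S_out s sS) => ->; rewrite inE.
move/(implyP (forallP S_hits _))/set0Pn => [u]; rewrite inE => /andP [uS].
by rewrite (negbTE (S_out u uS)).
Qed.

Lemma dcut_missed_eq_ge s : (1 < #|S|)%N -> s \in S ->
  dcut e c U <= alpha * dcut e c (missed_eq s).
Proof.
move=> S_gt1 sS; have [[U_n0 U_nT] U_min] := (andP U_approx.1, U_approx.2).
apply: U_min; apply/andP; split.
  by apply/set0Pn; exists s; rewrite inE missed_S.
have /subsetPn [v _ vU] : ~~ (setT \subset U) by rewrite subTset.
apply/eqP => /setP/(_ v); rewrite !inE missed_out // eq_sym -cards_eq0.
by have := cardsD1 s S; rewrite sS; lia.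
Qed.

Theorem card_minimal_hitting_set_le : 1 <= alpha -> #|S|%:R <= 2 * alpha.
Proof.
move=> alpha_ge1; have [S_le2 | S_gt2] := leqP #|S| 2.
  by apply: le_trans (_ : 2%:R <= _); [rewrite ler_nat | lra].
set k := #|S| in S_gt2 *; set dU := dcut e c U.
have dU_gt0 : 0 < dU := dcut_gt0 e_sym c_gt0 e_connected U_approx.1.
have sum_private : \sum_(s in S) dcut e c (private_cut s) <= k%:R * dU.
  by rewrite mulr_natl -sumr_const; apply: ler_sum => s; apply: dcut_private_cut_le.
have sum_levels : (k%:R - 2) * dU <= \sum_(i < k - 2) dcut e c (missed_le i).
  rewrite -natrB 1?ltnW // mulr_natl -{1}[(k - 2)%N]card_ord -sumr_const.
  by apply: ler_sum => i _; apply: dcut_missed_le_ge.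
have sum_tops : k%:R * dU <= alpha * \sum_(s in S) dcut e c (missed_eq s).
  rewrite [alpha * _]mulr_sumr mulr_natl -sumr_const; apply: ler_sum => s sS.
  by apply: dcut_missed_eq_ge; rewrite // ltnW.
have sum_tops_le : \sum_(s in S) dcut e c (missed_eq s) <= 2 * dU.
  by have := sum_dcut_missed_le; lra.
have : k%:R * dU <= 2 * alpha * dU.
  apply: le_trans sum_tops _; rewrite -mulrA mulrCA.
  by apply: ler_wpM2l => //; lra.
by rewrite ler_pM2r.
Qed.
End MinimalHittingSet.

Unset Implicit Arguments.

Theorem lemma2p3 (R : archiRealFieldType) (V : finType) (e : rel V) (c : V -> V -> R)
    (alpha : R) (U S : {set V}) :
  weighted_graph e c ->
  connected_graph e ->
  1 <= alpha ->
  approx_min_cut e c alpha U ->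
  (exists Q : {set V}, inC e c U Q) ->
  minset (fun S' : {set V} => (S' \subset U) && hitsC e c U S') S ->
  (#|S|%:Z <= Num.floor (2 * alpha) + 1)%R.
Proof.
move=> [e_sym _ c_sym c_gt0] e_conn alpha_ge1 U_approx _ S_min.
have /andP [S_sub_U S_hits] := minsetp S_min.
have S_minimal s : s \in S -> ~~ hitsC e c U (S :\ s).
  by move=> sS; have := minset_setD1 S_min sS; rewrite (subset_trans (subsetDl _ _) S_sub_U).
have := card_minimal_hitting_set_le e_sym c_sym c_gt0 e_conn U_approx S_sub_U S_hits S_minimal alpha_ge1.
rewrite -[#|S|%:R]/((#|S|%:Z)%:~R) -floor_ge_int.
by move/le_trans; apply; rewrite lerDl.
Qed.
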